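(* Let $\ell\ge2$ be an integer and let $F$ be one of: $2P_\ell$ with $\ell$ even; $P_{\ell+1}\cup P_\ell$; $P_{\ell+2}\cup P_\ell$ with $\ell$ odd; $2P_\ell\cup P_2$ with $\ell$ odd (so that $\delta_F=\ell-1$). Then for every integer $t\ge1$ and every integer $1\le s\le \delta_F+1$, $$\mathcal{N}_s\big(G_F(t(\ell-1)+1)\big)\ \ge\ \mathcal{N}_s\big(K_1+tK_{\ell-1}\big).$$
   Context: $P_m$, $K_m$, $E_m$: path, complete graph, edgeless graph on $m$ vertices; $G\cup H$ disjoint union, $tG$ is $t$ disjoint copies, $G+H$ the join. For a linear forest $F=P_{\ell_1}\cup\cdots\cup P_{\ell_k}$, $\delta_F=\sum_i\lfloor\ell_i/2\rfloor-1$, $G_F(n)=K_{\delta_F}+E_{n-\delta_F}$ if some $\ell_i$ is even and $G_F(n)=K_{\delta_F}+(E_{n-\delta_F-2}\cup K_2)$ if all $\ell_i$ are odd. $\mathcal{N}_s(G)$ is the number of copies of $K_s$ in $G$. *)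

From mathcomp Require Import all_boot.
Set Implicit Arguments. Unset Strict Implicit. Unset Printing Implicit Defensive.

(* Graphs on vertex set 'I_n are given by a relation e : rel 'I_n;
   only e x y for x != y matters (we always use symmetric, irreflexive e). *)

Definition is_clique n (e : rel 'I_n) (A : {set 'I_n}) : bool :=
  [forall x in A, forall y in A, (x != y) ==> e x y].

Definition Ns n (s : nat) (e : rel 'I_n) : nat :=
  #|[set A : {set 'I_n} | (#|A| == s) && is_clique e A]|.

(* A linear forest F = P_{l_1} u ... u P_{l_k} is represented by the list
   of its path orders [:: l_1; ...; l_k]. *)
Definition deltaF (F : seq nat) : nat := (sumn (map (fun l => l./2) F)).-1.

(* G_F(n) on vertex set 'I_n: vertices 0..deltaF-1 form the clique K_delta
   joined to everything; if all l_i are odd, additionally the two last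
   vertices n-2, n-1 (when both lie outside the K_delta part) form a K_2. *)
Definition GF (F : seq nat) (n : nat) : rel 'I_n :=
  fun i j =>
    (i != j) &&
    [|| (i < deltaF F), (j < deltaF F) |
        [&& all odd F, deltaF F <= n - 2, n - 2 <= i & n - 2 <= j]].

(* K_1 + t K_{l-1} on vertex set 'I_(t*(l-1)+1): vertex 0 is the apex,
   vertices 1 + k(l-1) .. (k+1)(l-1), k < t, form the k-th copy of K_{l-1}. *)
Definition K1tK (l t : nat) : rel 'I_(t * (l - 1) + 1) :=
  fun i j =>
    (i != j) &&
    [|| val i == 0, val j == 0 | ((val i).-1 %/ (l - 1) == (val j).-1 %/ (l - 1))].
Arguments K1tK l t i j : clear implicits.
Arguments GF F n i j : clear implicits.

From mathcomp Require Import all_boot.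
From mathcomp Require Import zify.
Set Implicit Arguments. Unset Strict Implicit. Unset Printing Implicit Defensive.

(* Write d = l - 1 = deltaF F.  Every clique A of K_1 + t K_d
   lies inside the apex 0 together with one block of d consecutive vertices.
   Keep the largest vertex m of A and translate every other vertex of A by the
   multiple of d that moves the block of m onto {1, ..., d}.  The translated
   vertices other than m all fall below d, so the image is a clique of every
   graph that contains K_d + E_(n-d) (all pairs with an endpoint below d); the
   largest vertex m survives, so A can be recovered from its image.  This
   gives an injection from s-cliques into s-cliques. *)

Section Translation.

Variable d : nat.
Hypothesis d_gt0 : 0 < d.

Definition block (x : nat) : nat := x.-1 %/ d.

(* x may share a clique with its largest vertex m: x is m itself, the apex,
   or a smaller vertex of the block of m. *)
Definition attached (m x : nat) : bool :=
  [|| x == m, x == 0 | (block x == block m) && (x < m)].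

Definition translate (m x : nat) : nat :=
  if x == m then x else x - block m * d.

(* Euclidean division by d, in a form usable by lia. *)
Lemma divn_eq_lt (a : nat) : a = a %/ d * d + a %% d /\ a %% d < d.
Proof. by split; [apply: divn_eq | apply: ltn_pmod]. Qed.

Lemma translate_lt m x :
  attached m x -> x != m -> translate m x < m /\ translate m x < d.
Proof.
rewrite /attached /translate /block => Hx ne; rewrite (negbTE ne) in Hx *.
have := divn_eq_lt m.-1; have := divn_eq_lt x.-1.
move: Hx; move: (x.-1 %/ d) (m.-1 %/ d) (m.-1 %% d) (x.-1 %% d) => qx q rm rx.
by case/or3P=> [//|/eqP|/andP[/eqP <- x_lt_m]]; move: (qx * d); lia.
Qed.

Lemma translate_inj m x y :
  attached m x -> attached m y -> translate m x = translate m y -> x = y.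
Proof.
rewrite /attached /translate /block => Hx Hy.
have := divn_eq_lt m.-1; have := divn_eq_lt x.-1; have := divn_eq_lt y.-1.
move: Hx Hy; move: (x.-1 %/ d) (y.-1 %/ d) (m.-1 %/ d) => qx qy q.
move: (m.-1 %% d) (x.-1 %% d) (y.-1 %% d) => rm rx ry.
case/or3P=> [/eqP ->|/eqP ->|/andP[/eqP <- x_lt_m]];
  case/or3P=> [/eqP ->|/eqP ->|/andP[/eqP <- y_lt_m]];
  move: (qx * d) (qy * d) => Qx Qy; repeat case: ifP; lia.
Qed.

Variable n : nat.

Definition translate_ord (m : nat) (x : 'I_n) : 'I_n :=
  if val x == m then x
  else Ordinal (leq_ltn_trans (leq_subr (block m * d) x) (ltn_ord x)).

Lemma translate_ordE m (x : 'I_n) : val (translate_ord m x) = translate m x.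
Proof. by rewrite /translate_ord /translate; case: eqP. Qed.

(* Largest vertex of a set (0 for the empty set). *)
Definition vmax (A : {set 'I_n}) : nat := \max_(x in A) val x.

Definition admissible (A : {set 'I_n}) : Prop :=
  forall x, x \in A -> attached (vmax A) x.

Definition compress (A : {set 'I_n}) : {set 'I_n} :=
  translate_ord (vmax A) @: A.

Section Admissible.

Variable A : {set 'I_n}.
Hypothesis A_adm : admissible A.

Lemma translate_ord_inj_in : {in A &, injective (translate_ord (vmax A))}.
Proof.
move=> x y xA yA /(congr1 val); rewrite !translate_ordE => E.
by apply: val_inj; apply: translate_inj E; apply: A_adm.
Qed.

Lemma card_compress : #|compress A| = #|A|.
Proof. exact: card_in_imset translate_ord_inj_in. Qed.

(* Compression keeps the largest vertex, so the translation can be undone. *)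
Lemma vmax_compress : vmax (compress A) = vmax A.
Proof.
have [A0|[y yA]] := set_0Vmem A; first by rewrite /compress A0 imset0.
have [z zA zmax] : {z | z \in A & vmax A = val z}.
  by apply: eq_bigmax_cond; apply/card_gt0P; exists y.
apply/eqP; rewrite eqn_leq; apply/andP; split.
  apply/bigmax_leqP => u /imsetP[x xA ->]; rewrite translate_ordE.
  have [ex|nx] := eqVneq (val x) (vmax A); first by rewrite /translate ex eqxx.
  by have [/ltnW] := translate_lt (A_adm xA) nx.
have zfix : val (translate_ord (vmax A) z) = vmax A.
  by rewrite translate_ordE /translate zmax eqxx.
rewrite -{1}zfix; apply: (@leq_bigmax_cond _ (fun x => x \in compress A)).
exact: imset_f.
Qed.

Lemma compress_low u v :
  u \in compress A -> v \in compress A -> u != v -> (val u < d) || (val v < d).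
Proof.
case/imsetP=> x xA ->; case/imsetP=> y yA ->; rewrite !translate_ordE => ne.
have [ex|nx] := eqVneq (val x) (vmax A); last first.
  by have [_ ->] := translate_lt (A_adm xA) nx.
have [ey|ny] := eqVneq (val y) (vmax A); last first.
  by have [_ ->] := translate_lt (A_adm yA) ny; rewrite orbT.
by move: ne; rewrite (_ : x = y) ?eqxx //; apply: val_inj; rewrite ex ey.
Qed.

End Admissible.

Lemma compress_inj (A B : {set 'I_n}) :
  admissible A -> admissible B -> compress A = compress B -> A = B.
Proof.
move=> HA HB E.
have Em : vmax A = vmax B by rewrite -(vmax_compress HA) -(vmax_compress HB) E.
have memE C (x : 'I_n) : admissible C -> vmax C = vmax A -> attached (vmax A) x ->
    (x \in C) = (translate_ord (vmax A) x \in compress C).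
  move=> HC <- Hx; apply/idP/imsetP => [xC|[z zC Exz]]; first by exists x.
  suff -> : x = z by [].
  apply: val_inj; apply: (translate_inj Hx (HC z zC)).
  by rewrite -!translate_ordE Exz.
apply/setP=> x; have [Hx|nHx] := boolP (attached (vmax A) x).
  by rewrite (memE A) // (memE B) // E.
by apply/idP/idP=> [/HA|/HB]; rewrite -?Em (negbTE nHx).
Qed.

Lemma clique_admissible (e : rel 'I_n) (A : {set 'I_n}) :
  (forall x y, x != y -> e x y -> [|| val x == 0, val y == 0 | block x == block y]) ->
  is_clique e A -> admissible A.
Proof.
move=> He /forall_inP Hc x xA.
have [z zA zmax] : {z | z \in A & vmax A = val z}.
  by apply: eq_bigmax_cond; apply/card_gt0P; exists x.
have xle : val x <= val z by rewrite -zmax; apply: leq_bigmax_cond.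
rewrite /attached zmax.
have [->|ne] := eqVneq (val x) (val z); first by rewrite eqxx.
have xz : x != z by apply: contra ne => /eqP ->.
have exz : e x z by move/forall_inP: (Hc x xA) => /(_ z zA); rewrite xz.
case/or3P: (He x z xz exz) => [->|/eqP z0|->]; rewrite ?orbT //.
  by move: xle; rewrite z0 leqn0 => ->; rewrite orTb orbT.
by rewrite ltn_neqAle ne xle !orbT.
Qed.

Lemma Ns_blocks_le (e e' : rel 'I_n) s :
  (forall x y, x != y -> e x y -> [|| val x == 0, val y == 0 | block x == block y]) ->
  (forall x y, x != y -> (val x < d) || (val y < d) -> e' x y) ->
  Ns s e <= Ns s e'.
Proof.
move=> He He'; rewrite /Ns; set C := [set A | _].
have adm A : A \in C -> admissible A.
  by rewrite inE => /andP[_]; apply: clique_admissible.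
rewrite -(@card_in_imset _ _ compress C); last first.
  by move=> A B /adm HA /adm HB; apply: compress_inj.
apply/subset_leq_card/subsetP => _ /imsetP[A AC ->].
have HA := adm A AC; move: AC; rewrite !inE card_compress // => /andP[-> _] /=.
apply/forall_inP => u uA; apply/forall_inP => v vA; apply/implyP => ne.
by apply: He' ne (compress_low HA uA vA ne).
Qed.

End Translation.

Lemma deltaF_forests l F : 2 <= l ->
  [\/ (F = [:: l; l] /\ ~~ odd l),
      F = [:: l.+1; l],
      (F = [:: l.+2; l] /\ odd l)
    | (F = [:: l; l; 2] /\ odd l)] -> deltaF F = l - 1.
Proof.
(* l = odd l + 2 * l./2 and uphalf l = odd l + l./2 reduce each case to lia *)
move=> l2 HF; have := odd_double_half l; rewrite -muln2.
have hu := uphalf_half l.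
case: HF => [[-> o]|->|[-> o]|[-> o]]; rewrite /deltaF /= ?hu;
  try move: o; move: (odd l) (l./2) => [] h; lia.
Qed.

Theorem claim4p2 (l : nat) (F : seq nat) :
  2 <= l ->
  [\/ (F = [:: l; l] /\ ~~ odd l),
      F = [:: l.+1; l],
      (F = [:: l.+2; l] /\ odd l)
    | (F = [:: l; l; 2] /\ odd l)] ->
  forall t s : nat, 1 <= t -> 1 <= s <= (deltaF F).+1 ->
    Ns s (K1tK l t) <= Ns s (GF F (t * (l - 1) + 1)).
Proof.
move=> l2 HF t s _ _; have d_gt0 : 0 < l - 1 by lia.
apply: (Ns_blocks_le d_gt0).
-
  by move=> x y _ /andP[].
- (* G_F contains K_(deltaF F) + E, and deltaF F = l - 1 *)
  move=> x y ne low; rewrite /GF ne (deltaF_forests l2 HF) /=.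
  by case/orP: low => ->; rewrite ?orbT.
Qed.
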